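(* Let $M$ be a homogeneous monoid that is automatic (respectively, biautomatic). Then for every finite alphabet $C$ representing a generating set of $M$, there is a language $K\subseteq C^*$ such that $(C,K)$ is an automatic (respectively, biautomatic) structure for $M$.
   Context: A monoid is homogeneous if it admits a finite presentation $\langle A\mid\mathcal{R}\rangle$ with $|u|=|v|$ for all $(u,v)\in\mathcal{R}$. For an alphabet $A$ and new symbol $\$$, $\delta_R$ maps a pair $(u,v)$ of words to the word over $(A\cup\{\$\})^2$ obtained by padding the shorter word at its end with $\$$'s; $\delta_L$ pads at the beginning. For a monoid $M$ generated by a finite alphabet $A$ and a regular language $L\subseteq A^*$ mapping onto $M$, let $L_a=\{(u,v)\in L\times L: ua=_M v\}$ and ${}_aL=\{(u,v)\in L\times L: au=_M v\}$ for $a\in A\cup\{\varepsilon\}$. $(A,L)$ is an automatic structure if all $L_a\delta_R$ are regular, a biautomatic structure if all $L_a\delta_R,{}_aL\delta_R,L_a\delta_L,{}_aL\delta_L$ are regular. $M$ is automatic (biautomatic) if it has an automatic (biautomatic) structure for some finite generating alphabet. *)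

From mathcomp Require Import all_boot.
Set Implicit Arguments. Unset Strict Implicit. Unset Printing Implicit Defensive.

Definition monoid_laws (M : Type) (mul : M -> M -> M) (one : M) : Prop :=
  [/\ forall x y z, mul x (mul y z) = mul (mul x y) z,
      forall x, mul one x = x &
      forall x, mul x one = x].

Definition eval_word (M : Type) (mul : M -> M -> M) (one : M)
  (A : Type) (f : A -> M) (w : seq A) : M :=
  foldr (fun a m => mul (f a) m) one w.

Definition generates (M : Type) (mul : M -> M -> M) (one : M)
  (A : Type) (f : A -> M) : Prop :=
  forall m : M, exists w : seq A, eval_word mul one f w = m.

Definition rstep (A : eqType) (R : seq (seq A * seq A)) (u v : seq A) : Prop :=
  exists x y l r, (l, r) \in R /\ u = x ++ l ++ y /\ v = x ++ r ++ y.

Inductive cong (A : eqType) (R : seq (seq A * seq A)) : seq A -> seq A -> Prop :=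
  | cong_refl u : cong R u u
  | cong_step u v : rstep R u v -> cong R u v
  | cong_sym u v : cong R u v -> cong R v u
  | cong_trans u v w : cong R u v -> cong R v w -> cong R u w.

Definition presents (M : Type) (mul : M -> M -> M) (one : M)
  (A : finType) (f : A -> M) (R : seq (seq A * seq A)) : Prop :=
  generates mul one f /\
  forall u v : seq A, eval_word mul one f u = eval_word mul one f v <-> cong R u v.

Definition homogeneous (M : Type) (mul : M -> M -> M) (one : M) : Prop :=
  exists (A : finType) (f : A -> M) (R : seq (seq A * seq A)),
    presents mul one f R /\ forall p, p \in R -> size p.1 = size p.2.

Definition regular (S : finType) (L : seq S -> Prop) : Prop :=
  exists (Q : finType) (q0 : Q) (delta : Q -> S -> Q) (F : pred Q),
    forall w : seq S, L w <-> F (foldl delta q0 w).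

(* The padding symbol $ is None; letters of (A u {$})^2 are pairs of options. *)
Definition padR (A : Type) (u v : seq A) : seq (option A * option A) :=
  let n := maxn (size u) (size v) in
  zip (map Some u ++ nseq (n - size u) None) (map Some v ++ nseq (n - size v) None).

Definition padL (A : Type) (u v : seq A) : seq (option A * option A) :=
  let n := maxn (size u) (size v) in
  zip (nseq (n - size u) None ++ map Some u) (nseq (n - size v) None ++ map Some v).

(* The word of a in A u {epsilon}, epsilon being None. *)
Definition letter_word (A : Type) (a : option A) : seq A :=
  if a is Some x then [:: x] else [::].

Definition padded_lang (A : Type)
  (pad : seq A -> seq A -> seq (option A * option A))
  (L : seq A -> Prop) (rel : seq A -> seq A -> Prop)
  : seq (option A * option A) -> Prop :=
  fun w => exists u v, [/\ L u, L v, rel u v & w = pad u v].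

Definition right_rel (M : Type) (mul : M -> M -> M) (one : M)
  (A : Type) (f : A -> M) (a : option A) (u v : seq A) : Prop :=
  eval_word mul one f (u ++ letter_word a) = eval_word mul one f v.

Definition left_rel (M : Type) (mul : M -> M -> M) (one : M)
  (A : Type) (f : A -> M) (a : option A) (u v : seq A) : Prop :=
  eval_word mul one f (letter_word a ++ u) = eval_word mul one f v.

Definition regular_onto (M : Type) (mul : M -> M -> M) (one : M)
  (A : finType) (f : A -> M) (L : seq A -> Prop) : Prop :=
  regular L /\ forall m : M, exists w, L w /\ eval_word mul one f w = m.

Definition automatic_structure (M : Type) (mul : M -> M -> M) (one : M)
  (A : finType) (f : A -> M) (L : seq A -> Prop) : Prop :=
  regular_onto mul one f L /\
  forall a : option A, regular (padded_lang (@padR A) L (right_rel mul one f a)).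

Definition biautomatic_structure (M : Type) (mul : M -> M -> M) (one : M)
  (A : finType) (f : A -> M) (L : seq A -> Prop) : Prop :=
  regular_onto mul one f L /\
  forall a : option A,
    [/\ regular (padded_lang (@padR A) L (right_rel mul one f a)),
        regular (padded_lang (@padR A) L (left_rel mul one f a)),
        regular (padded_lang (@padL A) L (right_rel mul one f a)) &
        regular (padded_lang (@padL A) L (left_rel mul one f a))].

Definition automatic (M : Type) (mul : M -> M -> M) (one : M) : Prop :=
  exists (A : finType) (f : A -> M) (L : seq A -> Prop),
    generates mul one f /\ automatic_structure mul one f L.

Definition biautomatic (M : Type) (mul : M -> M -> M) (one : M) : Prop :=
  exists (A : finType) (f : A -> M) (L : seq A -> Prop),
    generates mul one f /\ biautomatic_structure mul one f L.

(** In a homogeneous monoid all words over the presenting alphabet that represent an element [m]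
    have the same length [|m|], and [m |-> |m|] is a morphism to [(nat, +)]. Hence every generating
    alphabet [C] contains a letter for each generator of the presentation, and every [m] has a
    [C]-word of length [|m|]. Replace each letter [a] of a given (bi)automatic structure [(A', L')]
    by such a [C]-word for the same element and let [K] be the image of [L']. When [u m = v], the
    images of [u] and [v] differ in length by exactly [|m|]; a pumping argument on an automaton for
    the padded relation bounds this difference on all common prefixes, so a synchronous automaton
    reads the expanded pairs with bounded buffers. The relations for the letters of [C] are obtained
    by composing those for the letters of [A'], since padded regular relations compose. Left padding
    reduces to right padding by reversal. *)

From mathcomp Require Import all_boot zify.
From Stdlib Require Import IndefiniteDescription.

Set Implicit Arguments. Unset Strict Implicit. Unset Printing Implicit Defensive.

Lemma eq_regular (S : finType) (L1 L2 : seq S -> Prop) :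
  (forall w, L1 w <-> L2 w) -> regular L1 -> regular L2.
Proof.
move=> eqL [Q [q0 [d [F accF]]]]; exists Q, q0, d, F => w.
by rewrite -accF; apply: iff_sym.
Qed.

Lemma regular_preim (S T : finType) (h : T -> S) (L : seq S -> Prop) :
  regular L -> regular (fun w => L (map h w)).
Proof.
move=> [Q [q0 [d [F accF]]]]; exists Q, q0, (fun q a => d q (h a)), F => w.
rewrite accF; suff -> : forall q, foldl d q (map h w) = foldl (fun q a => d q (h a)) q w by [].
by elim: w => //= a w IHw q; rewrite IHw.
Qed.

Lemma regular_rev (S : finType) (L : seq S -> Prop) :
  regular L -> regular (fun w => L (rev w)).
Proof.
move=> [Q [q0 [d [F accF]]]].
pose back (X : {set Q}) a := [set q | d q a \in X].
have backE w : foldl back [set q | F q] w = [set q | F (foldl d q (rev w))].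
  elim/last_ind: w => [|w a IHw]; apply/setP => q; first by rewrite !inE.
  by rewrite foldl_rcons rev_rcons !inE IHw inE.
exists {set Q}%type, [set q | F q], back, (fun X : {set Q} => q0 \in X) => w.
by rewrite accF /= backE inE.
Qed.

Section SubsetConstruction.
Variables (S Q : finType) (init : pred Q) (eps : rel Q)
  (step : Q -> S -> Q -> bool) (fin : pred Q).

Inductive accepts : Q -> seq S -> Prop :=
| accepts_fin q : fin q -> accepts q [::]
| accepts_eps q q' s : eps q q' -> accepts q' s -> accepts q s
| accepts_step q a q' s : step q a q' -> accepts q' s -> accepts q (a :: s).

Lemma accepts_connect q p s : connect eps q p -> accepts p s -> accepts q s.
Proof.
move=> /connectP [pth qp ->]; elim: pth q qp => //= r pth IHpth q /andP [eps_qr rp] acc.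
exact: accepts_eps eps_qr (IHpth r rp acc).
Qed.

Lemma acceptsP q s : accepts q s ->
  exists2 p, connect eps q p &
    (s = [::] /\ fin p) \/ exists a s' q', [/\ s = a :: s', step p a q' & accepts q' s'].
Proof.
elim=> {q s} [q finq|q q' s eps_qq' _ [p q'p ?]|q a q' s ? ? _].
- by exists q => //; left.
- by exists p => //; apply: connect_trans (connect1 eps_qq') q'p.
- by exists q => //; right; exists a, s, q'.
Qed.

Definition eps_closure (X : {set Q}) : {set Q} :=
  [set q | [exists p in X, connect eps p q]].

Definition subset_step (X : {set Q}) (a : S) : {set Q} :=
  eps_closure [set q' | [exists p in X, step p a q']].

Lemma subset_run_accepts s (X : {set Q}) :
  [exists q in foldl subset_step (eps_closure X) s, fin q] <->
  exists2 q, q \in X & accepts q s.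
Proof.
elim: s X => [|a s IHs] X /=.
  split=> [/existsP [q /andP []] | [q qX /acceptsP [p qp [[_ finp]|[? [? [? []]]]]]]] //.
    rewrite inE => /existsP [p /andP [pX pq] finq].
    by exists p => //; apply: accepts_connect pq (accepts_fin finq).
  by apply/existsP; exists p; rewrite finp andbT inE; apply/existsP; exists q; rewrite qX.
rewrite IHs; split=> [[q'] | [q qX /acceptsP [p qp [[//]|[b [s' [q' [[<- <-] pq' acc]]]]]]]].
  rewrite inE => /existsP [p /andP []]; rewrite inE.
  move=> /existsP [q /andP [qX qp]] pq' acc.
  by exists q => //; apply: accepts_connect qp (accepts_step pq' acc).
exists q' => //; rewrite inE; apply/existsP; exists p; rewrite pq' andbT inE.
by apply/existsP; exists q; rewrite qX.
Qed.

Lemma regular_accepts : regular (fun s => exists2 q, init q & accepts q s).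
Proof.
exists {set Q}%type, (eps_closure [set q | init q]), subset_step,
  (fun X : {set Q} => [exists q in X, fin q]) => w.
by rewrite subset_run_accepts; split=> -[q]; rewrite ?inE => *; exists q; rewrite ?inE.
Qed.

End SubsetConstruction.
Lemma ohead_eq_None (T : eqType) (b : seq T) : (ohead b == None) = nilp b.
Proof. by case: b. Qed.

Section Padding.
Variable A : Type.
Implicit Types (u v : seq A) (x y : option A).

Lemma padR_cons a b u v : padR (a :: u) (b :: v) = (Some a, Some b) :: padR u v.
Proof. by rewrite /padR /= maxnSS !subSS. Qed.

Lemma padR_cons_nil a u : padR (a :: u) [::] = (Some a, None) :: padR u [::].
Proof. by rewrite /padR /= !maxn0 !subnn !subn0. Qed.

Lemma padR_nil_cons b v : padR [::] (b :: v) = (None, Some b) :: padR [::] v.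
Proof. by rewrite /padR /= !max0n !subnn !subn0. Qed.

Lemma padR_unfold u v : padR u v =
  if nilp u && nilp v then [::] else (ohead u, ohead v) :: padR (behead u) (behead v).
Proof.
by case: u => [|a u]; case: v => [|b v]; rewrite ?padR_cons ?padR_cons_nil ?padR_nil_cons.
Qed.

Lemma padR_diag u : padR u u = map (fun a => (Some a, Some a)) u.
Proof. by elim: u => [|a u IHu] //; rewrite padR_cons IHu. Qed.

Definition ocons x u := if x is Some a then a :: u else u.

Lemma ocons_cat x u v : ocons x u ++ v = ocons x (u ++ v).
Proof. by case: x. Qed.

Lemma padR_ocons x y u v : (x = None -> u = [::]) -> (y = None -> v = [::]) ->
  (x, y) <> (None, None) -> padR (ocons x u) (ocons y v) = (x, y) :: padR u v.
Proof.
case: x => [a|] xu; case: y => [b|] yv //= _; rewrite ?(xu erefl) ?(yv erefl).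
- exact: padR_cons.
- exact: padR_cons_nil.
- exact: padR_nil_cons.
Qed.

Lemma padR_fst u v : pmap fst (padR u v) = u.
Proof.
elim: u v => [|a u IHu] v; first by elim: v => [|b v IHv] //; rewrite padR_nil_cons.
by case: v => [|b v]; rewrite ?padR_cons ?padR_cons_nil /= IHu.
Qed.

Lemma padR_snd u v : pmap snd (padR u v) = v.
Proof.
elim: v u => [|b v IHv] u; first by elim: u => [|a u IHu] //; rewrite padR_cons_nil.
by case: u => [|a u]; rewrite ?padR_cons ?padR_nil_cons /= IHv.
Qed.

Lemma padR_inj u v u' v' : padR u v = padR u' v' -> u = u' /\ v = v'.
Proof.
by move=> e; split; [rewrite -(padR_fst u v) e padR_fst | rewrite -(padR_snd u v) e padR_snd].
Qed.

Lemma padL_rev u v : padL u v = rev (padR (rev u) (rev v)).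
Proof.
rewrite /padL /padR !size_rev rev_zip; last first.
  by rewrite !size_cat !size_map !size_nseq !size_rev !subnKC ?leq_maxl ?leq_maxr.
by rewrite !rev_cat !rev_nseq !map_rev !revK.
Qed.

Definition padR_lang (P : seq A -> seq A -> Prop) : seq (option A * option A) -> Prop :=
  fun w => exists u v, P u v /\ w = padR u v.

Lemma padR_langE P u v : padR_lang P (padR u v) <-> P u v.
Proof. by split=> [[u' [v' [Puv /padR_inj [-> ->]]]] | Puv]; last exists u, v. Qed.

Lemma eq_padR_lang (P P' : seq A -> seq A -> Prop) :
  (forall u v, P u v <-> P' u v) -> forall w, padR_lang P w <-> padR_lang P' w.
Proof. by move=> eqP w; split=> -[u [v [Puv ->]]]; exists u, v; split=> //; apply/eqP. Qed.

Lemma padded_langR L rel w :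
  padded_lang (@padR A) L rel w <-> padR_lang (fun u v => [/\ L u, L v & rel u v]) w.
Proof. by split=> [[u [v [? ? ? ->]]] | [u [v [[? ? ?] ->]]]]; exists u, v. Qed.

Lemma padded_langL L rel w :
  padded_lang (@padL A) L rel w <->
  padR_lang (fun u v => [/\ L (rev u), L (rev v) & rel (rev u) (rev v)]) (rev w).
Proof.
split=> [[u [v [? ? ? ->]]] | [u [v [[? ? ?] e]]]].
  by exists (rev u), (rev v); rewrite !revK padL_rev revK.
by exists (rev u), (rev v); rewrite padL_rev !revK -e revK.
Qed.

Lemma ocons_ohead u : ocons (ohead u) (behead u) = u.
Proof. by case: u. Qed.

Lemma ohead_None u : ohead u = None -> behead u = [::].
Proof. by case: u. Qed.

Lemma cat_ohead (b w : seq A) : (b = [::] -> w = [::]) ->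
  b ++ w = ocons (ohead b) (behead b ++ w) /\ (ohead b = None -> behead b ++ w = [::]).
Proof. by case: b => [|z b] /= bw; [rewrite bw | split]. Qed.

Lemma pmap_fst_cons x y p : pmap fst ((x, y) :: p) = ocons x (pmap fst p).
Proof. by case: x. Qed.

Lemma pmap_snd_cons x y p : pmap snd ((x, y) :: p) = ocons y (pmap snd p).
Proof. by case: y. Qed.

End Padding.

Section SkipStep.
Variables (A Q : Type) (d : Q -> option A * option A -> Q).

(* The letter [(None, None)] never occurs in a padded word; [skip_step] ignores it. *)
Definition skip_step (q : Q) (x y : option A) : Q :=
  if (x, y) is (None, None) then q else d q (x, y).

Lemma skip_stepE q x y : (x, y) <> (None, None) -> skip_step q x y = d q (x, y).
Proof. by case: x y => [?|] [?|]. Qed.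

Lemma foldl_padR_ocons q x y u v : (x = None -> u = [::]) -> (y = None -> v = [::]) ->
  foldl d q (padR (ocons x u) (ocons y v)) = foldl d (skip_step q x y) (padR u v).
Proof.
case: x => [a|] xu; case: y => [b|] yv; rewrite ?(xu erefl) ?(yv erefl) //.
all: by rewrite padR_ocons.
Qed.

Lemma foldl_padR q u v :
  foldl d q (padR u v) = foldl d (skip_step q (ohead u) (ohead v)) (padR (behead u) (behead v)).
Proof.
by rewrite -{1}(ocons_ohead u) -{1}(ocons_ohead v) foldl_padR_ocons //; apply: ohead_None.
Qed.

End SkipStep.

Section Composition.
Variables (A Q1 Q2 : finType).
Variables (d1 : Q1 -> option A * option A -> Q1) (F1 : pred Q1).
Variables (d2 : Q2 -> option A * option A -> Q2) (F2 : pred Q2).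

(* A state runs the two automata on [(u, w)] and [(w, v)], guessing the middle word [w];
   the flags record which of [u], [w] and [v] have ended. *)
Definition comp_state := (Q1 * Q2 * bool * bool * bool)%type.

Definition comp_ok (s : comp_state) (x y z : option A) : bool :=
  let: (_, _, ex, ey, ez) := s in
  [&& ~~ [&& x == None, y == None & z == None],
      ex ==> (x == None), ey ==> (y == None) & ez ==> (z == None)].

Definition comp_move (s : comp_state) (x y z : option A) : comp_state :=
  let: (q1, q2, ex, ey, ez) := s in
  (skip_step d1 q1 x y, skip_step d2 q2 y z,
   ex || (x == None), ey || (y == None), ez || (z == None)).

Definition comp_step (s : comp_state) (xz : option A * option A) (s' : comp_state) : bool :=
  [exists y, [&& ~~ ((xz.1 == None) && (xz.2 == None)), comp_ok s xz.1 y xz.2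
                 & s' == comp_move s xz.1 y xz.2]].

Definition comp_eps (s s' : comp_state) : bool :=
  [exists y, comp_ok s None y None && (s' == comp_move s None y None)].

Definition comp_fin (s : comp_state) : bool := let: (q1, q2, _, _, _) := s in F1 q1 && F2 q2.

Definition comp_inv (s : comp_state) (u w v : seq A) : Prop :=
  let: (q1, q2, eu, ew, ev) := s in
  [/\ eu -> u = [::], ew -> w = [::], ev -> v = [::]
    & F1 (foldl d1 q1 (padR u w)) && F2 (foldl d2 q2 (padR w v))].

Lemma comp_inv_move s x y z u w v :
  comp_ok s x y z -> comp_inv (comp_move s x y z) u w v ->
  [/\ x = None -> u = [::], y = None -> w = [::], z = None -> v = [::]
    & comp_inv s (ocons x u) (ocons y w) (ocons z v)].
Proof.
case: s => [[[[q1 q2] eu] ew] ev] /and4P [_ okx oky okz] [/= Hu Hw Hv accF].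
have xu : x = None -> u = [::] by move=> e; apply: Hu; rewrite e orbT.
have yw : y = None -> w = [::] by move=> e; apply: Hw; rewrite e orbT.
have zv : z = None -> v = [::] by move=> e; apply: Hv; rewrite e orbT.
split=> //.
split; last by rewrite !foldl_padR_ocons.
- by move/(implyP okx)/eqP => ex; rewrite ex xu.
- by move/(implyP oky)/eqP => ey; rewrite ey yw.
- by move/(implyP okz)/eqP => ez; rewrite ez zv.
Qed.

Lemma comp_inv_behead s u w v : comp_inv s u w v ->
  comp_inv (comp_move s (ohead u) (ohead w) (ohead v)) (behead u) (behead w) (behead v).
Proof.
case: s => [[[[q1 q2] eu] ew] ev] [/= Hu Hw Hv].
rewrite !(foldl_padR _ _ u) !(foldl_padR _ _ w) => accF; split=> //.
- by case/orP=> [/Hu -> | /eqP/ohead_None].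
- by case/orP=> [/Hw -> | /eqP/ohead_None].
- by case/orP=> [/Hv -> | /eqP/ohead_None].
Qed.

Lemma comp_sound s t : accepts comp_eps comp_step comp_fin s t ->
  exists u w v, t = padR u v /\ comp_inv s u w v.
Proof.
elim=> {s t} [[[[[q1 q2] eu] ew] ev] /= finF | s s' t | s [x z] s' t].
- by exists [::], [::], [::].
- move=> /existsP [y /andP [ok /eqP ->]] _ [u [w [v [-> inv]]]].
  have [Hu _ Hv inv'] := comp_inv_move ok inv.
  by move: inv'; rewrite /= (Hu erefl) (Hv erefl); exists [::], (ocons y w), [::].
move=> /existsP [y /and3P [xz ok /eqP ->]] _ [u [w [v [-> inv]]]].
have [Hu _ Hv inv'] := comp_inv_move ok inv.
exists (ocons x u), (ocons y w), (ocons z v); split=> //.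
by rewrite padR_ocons //= => -[ex ez]; rewrite ex ez in xz.
Qed.

Lemma comp_complete s u w v :
  comp_inv s u w v -> accepts comp_eps comp_step comp_fin s (padR u v).
Proof.
have [n] := ubnP (size u + size w + size v).
elim: n s u w v => // n IHn s u w v size_lt inv.
have [/and3P [/nilP u0 /nilP w0 /nilP v0] | nonnil] := boolP [&& nilp u, nilp w & nilp v].
  move: inv; rewrite u0 w0 v0.
  by case: s => [[[[q1 q2] eu] ew] ev] [_ _ _ finF]; apply: accepts_fin.
have ok : comp_ok s (ohead u) (ohead w) (ohead v).
  case: s inv => [[[[q1 q2] eu] ew] ev] [Hu Hw Hv _] /=; apply/and4P; split.
  - by move: nonnil; case: (u) => [|? ?]; case: (w) => [|? ?]; case: (v).
  - by apply/implyP => /Hu ->.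
  - by apply/implyP => /Hw ->.
  - by apply/implyP => /Hv ->.
have size' : size (behead u) + size (behead w) + size (behead v) < n.
  by move: nonnil size_lt; case: (u) => [|? ?]; case: (w) => [|? ?]; case: (v) => [|? ?] //=; lia.
have acc' := IHn _ _ _ _ size' (comp_inv_behead inv).
have [/andP [/nilP u0 /nilP v0] | uv] := boolP (nilp u && nilp v).
  move: ok acc'; rewrite u0 v0 => ok acc'.
  by apply: accepts_eps acc'; apply/existsP; exists (ohead w); rewrite ok eqxx.
rewrite padR_unfold (negbTE uv); apply: accepts_step acc'; apply/existsP; exists (ohead w).
by rewrite ok eqxx andbT; move: uv; case: (u) => [|? ?]; case: (v).
Qed.

End Composition.

Lemma regular_padR_comp (A : finType) (P1 P2 : seq A -> seq A -> Prop) :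
  regular (padR_lang P1) -> regular (padR_lang P2) ->
  regular (padR_lang (fun u v => exists w, P1 u w /\ P2 w v)).
Proof.
move=> [Q1 [q1 [d1 [F1 accF1]]]] [Q2 [q2 [d2 [F2 accF2]]]].
pose s0 : comp_state Q1 Q2 := (q1, q2, false, false, false).
have := regular_accepts (pred1 s0) (comp_eps d1 d2) (comp_step d1 d2) (comp_fin F1 F2).
apply: eq_regular => t.
split=> [[s /eqP -> /comp_sound [u [w [v [-> [_ _ _ /andP [accw1 accw2]]]]]]] | ].
  by exists u, v; split=> //; exists w; split; apply/padR_langE; [apply/accF1 | apply/accF2].
move=> [u [v [[w [P1uw P2wv]] ->]]]; exists s0; first exact: eqxx.
apply: (comp_complete (w := w)).
by split=> //; apply/andP; split; [apply/accF1/padR_langE | apply/accF2/padR_langE].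
Qed.

Lemma foldl_pump (S : Type) (Q : finType) (d : Q -> S -> Q) q p : #|Q| < size p ->
  exists x y t, [/\ p = x ++ y ++ t, 0 < size y & foldl d q (x ++ y) = foldl d q x].
Proof.
move=> size_p; pose run := [seq foldl d q (take k p) | k <- iota 0 #|Q|.+1].
have /(uniqPn q) [i [j [ij]]] : ~~ uniq run.
  apply/negP => /card_uniqP card_run; have := max_card (mem run).
  by rewrite card_run size_map size_iota ltnn.
rewrite size_map size_iota => j_lt; have i_lt := ltn_trans ij j_lt.
rewrite !(nth_map 0) ?size_iota // !nth_iota // !add0n => run_ij.
exists (take i p), (drop i (take j p)), (drop j p); split.
- by rewrite catA -{1}(take_takel p (ltnW ij)) cat_take_drop cat_take_drop.
- by rewrite size_drop size_takel ?subn_gt0 //; lia.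
- by rewrite -{1}(take_takel p (ltnW ij)) cat_take_drop run_ij.
Qed.

Lemma val_insub_bseq n (T : Type) (s : seq T) : size s <= n -> insub_bseq n s = s :> seq T.
Proof. by move=> size_s; rewrite /insub_bseq insubdK. Qed.

Section Expansion.
Variables (A B : finType) (E : A -> seq B).

Definition expand (u : seq A) : seq B := flatten (map E u).

Definition oexpand (x : option A) : seq B := if x is Some a then E a else [::].

Lemma expand_cat u v : expand (u ++ v) = expand u ++ expand v.
Proof. by rewrite /expand map_cat flatten_cat. Qed.

Lemma expand_ocons x u : expand (ocons x u) = oexpand x ++ expand u.
Proof. by case: x. Qed.

Lemma expand_behead u : expand u = oexpand (ohead u) ++ expand (behead u).
Proof. by case: u. Qed.

Definition max_expand := \max_(a : A) size (E a).

Lemma size_oexpand x : size (oexpand x) <= max_expand.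
Proof. by case: x => [a|] //=; apply: (leq_bigmax a). Qed.

Lemma size_expand u : size (expand u) <= max_expand * size u.
Proof.
elim: u => [|a u IHu] //=; rewrite size_cat mulnS leq_add //.
exact: (size_oexpand (Some a)).
Qed.

Local Notation wt1 p := (size (expand (pmap fst p))).
Local Notation wt2 p := (size (expand (pmap snd p))).

Variables (P : seq A -> seq A -> Prop) (c : nat).
Hypothesis size_expandP : forall u v, P u v -> size (expand v) = size (expand u) + c.
Variables (Q : finType) (q0 : Q) (d : Q -> option A * option A -> Q) (F : pred Q).
Hypothesis accF : forall w, padR_lang P w <-> F (foldl d q0 w).

Lemma accepted_balance w : F (foldl d q0 w) -> wt2 w = wt1 w + c.
Proof. by move=> /accF [u [v [Puv ->]]]; rewrite padR_fst padR_snd (size_expandP Puv). Qed.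

Definition max_lag := max_expand * #|Q|.

(* Cutting a loop out of [p] keeps [p ++ s] accepted, so the loop has zero balance. *)
Lemma prefix_lag p s : F (foldl d q0 (p ++ s)) ->
  wt1 p <= wt2 p + max_lag /\ wt2 p <= wt1 p + max_lag.
Proof.
have [n] := ubnP (size p); elim: n p s => // n IHn p s size_p acc_ps.
have [short | /(foldl_pump d q0) [x [y [t [def_p y_gt0 loop]]]]] := leqP (size p) #|Q|.
  suff wt_le f : size (expand (pmap f p)) <= max_lag by have := wt_le fst; have := wt_le snd; lia.
  rewrite (leq_trans (size_expand _)) // leq_mul2l size_pmap.
  by rewrite (leq_trans (count_size _ _)) ?orbT.
have acc_xts : F (foldl d q0 ((x ++ t) ++ s)).
  by rewrite -catA foldl_cat -loop -foldl_cat -!catA; move: acc_ps; rewrite def_p -!catA.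
have [] := IHn (x ++ t) s _ acc_xts.
  by move: size_p; rewrite def_p !size_cat; lia.
have := accepted_balance acc_ps; have := accepted_balance acc_xts.
rewrite def_p !pmap_cat !expand_cat !size_cat.
lia.
Qed.

(* Buffers are refilled only while one of them is empty; by [prefix_lag] the other one then
   holds at most [max_lag] letters. *)
Definition buf_bound := max_lag + max_expand.

(* The source automaton's state, the produced but not yet emitted letters of each coordinate,
   and whether each source coordinate has ended. *)
Definition buf_state := (Q * buf_bound.-bseq B * buf_bound.-bseq B * bool * bool)%type.

Definition buf_eps (s s' : buf_state) : bool :=
  let: (q, b1, b2, e1, e2) := s in let: (q', b1', b2', e1', e2') := s' in
  [exists h : option A * option A,
    [&& ~~ ((h.1 == None) && (h.2 == None)), e1 ==> (h.1 == None), e2 ==> (h.2 == None),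
        q' == d q h &
        [&& (b1' : seq B) == b1 ++ oexpand h.1, (b2' : seq B) == b2 ++ oexpand h.2,
            e1' == e1 || (h.1 == None) & e2' == e2 || (h.2 == None)]]].

Definition pop (b : seq B) (e : bool) (x : option B) (b' : seq B) (e' : bool) : bool :=
  if x is Some z then (b == z :: b') && (e' == e) else [&& b == [::], b' == [::] & e'].

Definition buf_step (s : buf_state) (x : option B * option B) (s' : buf_state) : bool :=
  let: (q, b1, b2, e1, e2) := s in let: (q', b1', b2', e1', e2') := s' in
  [&& ~~ ((x.1 == None) && (x.2 == None)), q' == q, pop b1 e1 x.1 b1' e1' & pop b2 e2 x.2 b2' e2'].

Definition buf_fin (s : buf_state) : bool :=
  let: (q, b1, b2, _, _) := s in [&& F q, (b1 : seq B) == [::] & (b2 : seq B) == [::]].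

Definition buf_inv (s : buf_state) t : Prop :=
  let: (q, b1, b2, e1, e2) := s in
  exists u v, [/\ F (foldl d q (padR u v)), e1 -> u = [::], e2 -> v = [::]
                & t = padR ((b1 : seq B) ++ expand u) ((b2 : seq B) ++ expand v)].

Lemma popP b e x b' e' : pop b e x b' e' ->
  [/\ b = ocons x b', x = None -> b' = [::] & e' = e || (x == None)].
Proof.
case: x => [z|] /=; first by case/andP => /eqP -> /eqP ->; rewrite orbF.
by case/and3P => /eqP -> /eqP -> ->; rewrite orbT.
Qed.

Lemma buf_inv_eps s s' t : buf_eps s s' -> buf_inv s' t -> buf_inv s t.
Proof.
case: s s' => [[[[q b1] b2] e1] e2] [[[[q' b1'] b2'] e1'] e2'] /existsP [[x y]].
case/and5P=> /= xy ok1 ok2 /eqP -> /and4P [/eqP -> /eqP -> /eqP -> /eqP ->].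
move=> [u [v [accF' Hu Hv ->]]].
have xu : x = None -> u = [::] by move=> ex; apply: Hu; rewrite ex orbT.
have yv : y = None -> v = [::] by move=> ey; apply: Hv; rewrite ey orbT.
have xyN : (x, y) <> (None, None) by move=> [ex ey]; rewrite ex ey in xy.
exists (ocons x u), (ocons y v); split.
- by rewrite foldl_padR_ocons // skip_stepE.
- by move/(implyP ok1)/eqP => ex; rewrite ex xu.
- by move/(implyP ok2)/eqP => ey; rewrite ey yv.
- by rewrite !expand_ocons !catA.
Qed.

Lemma buf_inv_step s x s' t : buf_step s x s' -> buf_inv s' t -> buf_inv s (x :: t).
Proof.
case: s s' x => [[[[q b1] b2] e1] e2] [[[[q' b1'] b2'] e1'] e2'] [x1 x2].
case/and4P=> /= x12 /eqP -> /popP [-> x1b ->] /popP [-> x2b ->] [u [v [accF' Hu Hv ->]]].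
exists u, v; split=> //.
- by move=> e1u; apply: Hu; rewrite e1u.
- by move=> e2v; apply: Hv; rewrite e2v.
rewrite !ocons_cat padR_ocons //; last by case: (x1) (x2) x12 => [?|] [?|].
- by move=> ex; rewrite (x1b ex) Hu // ex orbT.
- by move=> ex; rewrite (x2b ex) Hv // ex orbT.
Qed.

Lemma buf_sound s t : accepts buf_eps buf_step buf_fin s t -> buf_inv s t.
Proof.
elim=> {s t} [s fin_s | s s' t eps _ | s x s' t step _]; last 2 first.
- exact: buf_inv_eps.
- exact: buf_inv_step.
case: s fin_s => [[[[q b1] b2] e1] e2] /and3P [finq /eqP b1E /eqP b2E].
by exists [::], [::]; rewrite b1E b2E.
Qed.

Definition lag_bounded (b1 b2 : seq B) u v := forall p s, padR u v = p ++ s ->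
  size b1 + wt1 p <= size b2 + wt2 p + max_lag /\ size b2 + wt2 p <= size b1 + wt1 p + max_lag.

Definition buf_ready (s : buf_state) u v : Prop :=
  let: (q, b1, b2, e1, e2) := s in
  [/\ F (foldl d q (padR u v)), e1 -> u = [::], e2 -> v = [::] & lag_bounded b1 b2 u v].

Definition buf_output (s : buf_state) u v :=
  let: (_, b1, b2, _, _) := s in padR ((b1 : seq B) ++ expand u) ((b2 : seq B) ++ expand v).

Lemma lag_bounded_read b1 b2 u v : lag_bounded b1 b2 u v -> ~~ (nilp u && nilp v) ->
  lag_bounded (b1 ++ oexpand (ohead u)) (b2 ++ oexpand (ohead v)) (behead u) (behead v).
Proof.
move=> lag nonnil p s e; have := lag ((ohead u, ohead v) :: p) s.
rewrite padR_unfold (negbTE nonnil) e pmap_fst_cons pmap_snd_cons !expand_ocons.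
by rewrite !size_cat => /(_ erefl); lia.
Qed.

Lemma lag_bounded_size b1 b2 u v : lag_bounded b1 b2 u v -> nilp b1 || nilp b2 ->
  size b1 <= max_lag /\ size b2 <= max_lag.
Proof. by move=> /(_ [::] _ erefl) /= lag; case/orP=> /nilP b0; move: lag; rewrite b0 /=; lia. Qed.

Lemma lag_bounded_write b1 b2 u v : lag_bounded b1 b2 u v ->
  (nilp u && nilp v) || ~~ (nilp b1 || nilp b2) ->
  lag_bounded (behead b1) (behead b2) u v.
Proof.
move=> lag src_b12 p s e; have := lag p s e; rewrite !size_behead -!subn1.
case/orP: src_b12 => [/andP [/nilP u0 /nilP v0] | ].
  have p0 : p = [::] by move: e; rewrite u0 v0; case: p.
  by rewrite p0 /=; lia.
by case: (b1) (b2) => [|? ?] [|? ?] //=; lia.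
Qed.

Lemma buf_read q (b1 b2 : buf_bound.-bseq B) e1 e2 u v :
  buf_ready (q, b1, b2, e1, e2) u v -> ~~ (nilp u && nilp v) -> nilp b1 || nilp b2 ->
  exists2 s', buf_eps (q, b1, b2, e1, e2) s' &
    buf_ready s' (behead u) (behead v) /\
    buf_output s' (behead u) (behead v) = buf_output (q, b1, b2, e1, e2) u v.
Proof.
move=> [accq Hu Hv lag] src b12; have [le1 le2] := lag_bounded_size lag b12.
have fit (b : seq B) x : size b <= max_lag -> size (b ++ oexpand x) <= buf_bound.
  by move=> le_b; rewrite size_cat leq_add ?size_oexpand.
have uvN : (ohead u, ohead v) <> (None, None).
  by move: src; case: (u) (v) => [|? ?] [|? ?].
exists (d q (ohead u, ohead v), insub_bseq buf_bound (b1 ++ oexpand (ohead u)),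
        insub_bseq buf_bound (b2 ++ oexpand (ohead v)),
        e1 || (ohead u == None), e2 || (ohead v == None)).
  apply/existsP; exists (ohead u, ohead v); rewrite /= !val_insub_bseq ?fit // !eqxx !andbT.
  apply/and3P; split; [|by apply/implyP => /Hu ->|by apply/implyP => /Hv ->].
  by apply/negP => /andP [/eqP ex /eqP ey]; apply: uvN; rewrite ex ey.
rewrite /= !val_insub_bseq ?fit // (expand_behead u) (expand_behead v) !catA; split=> //.
split; last exact: lag_bounded_read.
- by rewrite -skip_stepE // -foldl_padR.
- by case/orP=> [/Hu -> | /eqP/ohead_None].
- by case/orP=> [/Hv -> | /eqP/ohead_None].
Qed.

Lemma buf_write q (b1 b2 : buf_bound.-bseq B) e1 e2 u v :
  buf_ready (q, b1, b2, e1, e2) u v -> (nilp u && nilp v) || ~~ (nilp b1 || nilp b2) ->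
  ~~ (nilp b1 && nilp b2) ->
  exists2 s', buf_step (q, b1, b2, e1, e2) (ohead b1, ohead b2) s' &
    buf_ready s' u v /\
    buf_output (q, b1, b2, e1, e2) u v = (ohead b1, ohead b2) :: buf_output s' u v.
Proof.
move=> [accq Hu Hv lag] src_b12 b12.
have src_nil : nilp b1 || nilp b2 -> u = [::] /\ v = [::].
  by move=> b0; move: src_b12; rewrite b0 orbF => /andP [/nilP -> /nilP ->].
have fit (b : buf_bound.-bseq B) : size (behead b) <= buf_bound.
  by rewrite size_behead (leq_trans (leq_pred _) (size_bseq b)).
exists (q, insub_bseq buf_bound (behead b1), insub_bseq buf_bound (behead b2),
        e1 || (ohead b1 == None), e2 || (ohead b2 == None)).
  rewrite /= !val_insub_bseq ?fit // eqxx /=; apply/and3P; split.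
  - by move: b12; case: (b1 : seq B) (b2 : seq B) => [|? ?] [|? ?].
  - by case: (b1 : seq B) => [|? ?] /=; rewrite ?orbT ?orbF ?eqxx.
  - by case: (b2 : seq B) => [|? ?] /=; rewrite ?orbT ?orbF ?eqxx.
rewrite /= !val_insub_bseq ?fit //; split.
  split=> //; last by apply: lag_bounded_write.
  - case/orP=> [/Hu // | ]; rewrite ohead_eq_None => b0.
    by case: src_nil => [|-> _ //]; rewrite b0.
  - case/orP=> [/Hv // | ]; rewrite ohead_eq_None => b0.
    by case: src_nil => [|_ -> //]; rewrite b0 orbT.
have b1u : (b1 : seq B) = [::] -> expand u = [::].
  by move=> /nilP b0; case: src_nil => [|-> _ //]; rewrite b0.
have b2v : (b2 : seq B) = [::] -> expand v = [::].
  by move=> /nilP b0; case: src_nil => [|_ -> //]; rewrite b0 orbT.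
have [-> nil1] := cat_ohead b1u; have [-> nil2] := cat_ohead b2v.
rewrite padR_ocons //; apply: contraTnot b12 => -[].
by case: (b1 : seq B) (b2 : seq B) => [|? ?] [|? ?].
Qed.

Lemma buf_complete s u v : buf_ready s u v -> accepts buf_eps buf_step buf_fin s (buf_output s u v).
Proof.
have [n] := ubnP (size (buf_output s u v) + size u + size v).
elim: n s u v => // n IHn [[[[q b1] b2] e1] e2] u v lt_n ready.
have [/andP [src b12] | not_read] := boolP (~~ (nilp u && nilp v) && (nilp b1 || nilp b2)).
  have [s' eps [ready' out']] := buf_read ready src b12.
  apply: accepts_eps eps _; rewrite -out'; apply: IHn ready'.
  by move: lt_n src; rewrite -out'; case: (u) (v) => [|? ?] [|? ?] //=; lia.
have [/andP [/andP [/nilP b10 /nilP b20] /andP [/nilP u0 /nilP v0]] | not_fin] :=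
  boolP ((nilp b1 && nilp b2) && (nilp u && nilp v)).
  case: ready => accq _ _ _; rewrite /= b10 b20 u0 v0; apply: accepts_fin.
  by move: accq; rewrite /= b10 b20 u0 v0 !eqxx => ->.
have src_b12 : (nilp u && nilp v) || ~~ (nilp b1 || nilp b2).
  by move: not_read; rewrite negb_and negbK.
have b12 : ~~ (nilp b1 && nilp b2).
  by apply: contra not_fin => b0; move: src_b12; rewrite b0 (andP b0).1 /= orbF => ->.
have [s' step [ready' out']] := buf_write ready src_b12 b12.
rewrite out'; apply: accepts_step step (IHn _ _ _ _ ready').
by move: lt_n; rewrite out' /=; lia.
Qed.

End Expansion.

Lemma regular_expand (A B : finType) (E : A -> seq B) (P : seq A -> seq A -> Prop) c :
  (forall u v, P u v -> size (expand E v) = size (expand E u) + c) ->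
  regular (padR_lang P) ->
  regular (padR_lang (fun x y => exists u v, [/\ P u v, x = expand E u & y = expand E v])).
Proof.
move=> sizeP [Q [q0 [d [F accF]]]].
pose s0 : buf_state E Q := (q0, [bseq], [bseq], false, false).
apply: eq_regular (regular_accepts (pred1 s0) (buf_eps d) (@buf_step _ _ E Q) (buf_fin F)) => t.
split=> [[s /eqP -> /buf_sound [u [v [accuv _ _ ->]]]] | [x [y [[u [v [Puv -> ->]]] ->]]]].
  by exists (expand E u), (expand E v); split=> //; exists u, v; split=> //; apply/padR_langE/accF.
exists s0; first exact: eqxx.
apply: (buf_complete (u := u) (v := v)); split=> //; first exact/accF/padR_langE.
move=> p s e; have := prefix_lag sizeP accF (s := s) (p := p).
by rewrite -e => /(_ (proj1 (accF _) (proj2 (padR_langE _ _ _) Puv))); lia.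
Qed.

Section HomogeneousMonoid.
Variables (M : Type) (mul : M -> M -> M) (one : M).
Hypothesis monoidM : monoid_laws mul one.
Local Notation ev f := (eval_word mul one f).

Lemma eval_word_cat (X : Type) (f : X -> M) u v : ev f (u ++ v) = mul (ev f u) (ev f v).
Proof.
case: monoidM => mulA mul1 _.
by elim: u => [|a u IHu] /=; rewrite ?mul1 // IHu mulA.
Qed.

Lemma eval_word1 (X : Type) (f : X -> M) a : ev f [:: a] = f a.
Proof. by case: monoidM => _ _ mulr1; rewrite /= mulr1. Qed.

Lemma right_relE (X : Type) (h : X -> M) a u v :
  right_rel mul one h a u v <-> mul (ev h u) (ev h (letter_word a)) = ev h v.
Proof. by rewrite /right_rel eval_word_cat. Qed.

Lemma left_relE (X : Type) (h : X -> M) a u v :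
  left_rel mul one h a u v <-> mul (ev h (letter_word a)) (ev h u) = ev h v.
Proof. by rewrite /left_rel eval_word_cat. Qed.

Variables (A : finType) (f : A -> M) (R : seq (seq A * seq A)).
Hypothesis presM : presents mul one f R.
Hypothesis homR : forall p, p \in R -> size p.1 = size p.2.

Lemma cong_size u v : cong R u v -> size u = size v.
Proof.
elim=> {u v} [//|u v [x [y [l [r [lr [-> ->]]]]]]|//|u v w _ -> _ ->] //.
by rewrite !size_cat (homR lr).
Qed.

Definition mlen (m : M) : nat :=
  size (proj1_sig (constructive_indefinite_description _ (proj1 presM m))).

Lemma mlen_eval u : mlen (ev f u) = size u.
Proof.
rewrite /mlen; case: constructive_indefinite_description => w /= evw.
exact/cong_size/(proj2 presM).
Qed.

Lemma mlenM x y : mlen (mul x y) = mlen x + mlen y.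
Proof.
have [u <-] := proj1 presM x; have [v <-] := proj1 presM y.
by rewrite -eval_word_cat !mlen_eval size_cat.
Qed.

Lemma mlen_eq0 m : mlen m = 0 -> m = one.
Proof. by have [u <-] := proj1 presM m; rewrite mlen_eval => /size0nil ->. Qed.

Lemma mlen1 : mlen one = 0.
Proof. exact: (mlen_eval [::]). Qed.

Variables (C : finType) (g : C -> M).
Hypothesis genC : generates mul one g.

Lemma generates_atom a : exists c, g c = f a.
Proof.
have [w evw] := genC (f a).
have : mlen (ev g w) = 1 by rewrite evw -(eval_word1 f) mlen_eval.
case: monoidM => _ mul1 mulr1.
elim: w evw => [|c w IHw] /= evw; first by rewrite mlen1.
rewrite mlenM; case gc: (mlen (g c)) => [|[|//]].
  by rewrite add0n; apply: IHw; rewrite -evw (mlen_eq0 gc) mul1.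
by move=> /eqP; rewrite add1n eqSS => /eqP /mlen_eq0 w1; exists c; rewrite -evw w1 mulr1.
Qed.

Lemma word_of_mlen m : exists x : seq C, ev g x = m /\ size x = mlen m.
Proof.
have [u <-] := proj1 presM m; rewrite mlen_eval.
elim: u => [|a u [x [evx sizex]]] /=; first by exists [::].
by have [c gc] := generates_atom a; exists (c :: x); rewrite /= gc evx sizex.
Qed.

End HomogeneousMonoid.

Definition act_rel (X M : Type) (L : seq X -> Prop) (ev : seq X -> M) (act : M -> M -> M)
    (m : M) (u v : seq X) : Prop :=
  [/\ L u, L v & act m (ev u) = ev v].

Definition image_lang (X C : finType) (E : X -> seq C) (L : seq X -> Prop) : seq C -> Prop :=
  fun x => exists2 u, L u & x = expand E u.

Definition is_action (M : Type) (mul : M -> M -> M) (act : M -> M -> M) : Prop :=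
  (forall x y z, act (mul x y) z = act y (act x z)) \/
  (forall x y z, act (mul x y) z = act x (act y z)).

Section ActionTransfer.
Variables (M : Type) (mul : M -> M -> M) (one : M).
Variables (X : finType) (L : seq X -> Prop) (ev : seq X -> M) (act : M -> M -> M).
Hypothesis ontoL : forall m, exists t, L t /\ ev t = m.
Hypothesis actM : is_action mul act.
Local Notation act_lang m := (padR_lang (act_rel L ev act m)).

Lemma regular_act_relM x y :
  regular (act_lang x) -> regular (act_lang y) -> regular (act_lang (mul x y)).
Proof.
have comp z1 z2 : (forall t, act (mul x y) t = act z2 (act z1 t)) ->
    regular (act_lang z1) -> regular (act_lang z2) -> regular (act_lang (mul x y)).
  move=> actE reg1 reg2; apply: eq_regular (regular_padR_comp reg1 reg2).
  apply: eq_padR_lang => u v; split=> [[w [[Lu Lw evw] [_ Lv evv]]] | [Lu Lv evv]].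
    by split; rewrite // actE evw.
  have [w [Lw evw]] := ontoL (act z1 (ev u)).
  by exists w; split; split; rewrite // evw -actE.
by case: actM => actE regx regy; [apply: (comp x y) | apply: (comp y x)].
Qed.

Variable (h : X -> M).
Hypothesis genh : generates mul one h.
Hypothesis regular_one : regular (act_lang one).
Hypothesis regular_gen : forall a, regular (act_lang (h a)).

Lemma regular_act_rel m : regular (act_lang m).
Proof. by have [w <-] := genh m; elim: w => [|a w IHw] //=; apply: regular_act_relM. Qed.

Variables (C : finType) (E : X -> seq C) (evC : seq C -> M) (len : M -> nat).
Hypothesis evC_expand : forall u, evC (expand E u) = ev u.
Hypothesis size_expand : forall u, size (expand E u) = len (ev u).
Hypothesis len_act : forall m z, len (act m z) = len z + len m.

Lemma regular_image_act_rel m : regular (padR_lang (act_rel (image_lang E L) evC act m)).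
Proof.
have sizeP u v : act_rel L ev act m u v -> size (expand E v) = size (expand E u) + len m.
  by case=> _ _ evv; rewrite !size_expand -evv len_act.
apply: eq_regular (regular_expand sizeP (regular_act_rel m)).
apply: eq_padR_lang => x y; split=> [[u [v [[Lu Lv evv] -> ->]]] | ].
  by split; [exists u | exists v | rewrite !evC_expand].
by move=> [[u Lu ->] [v Lv ->]]; rewrite !evC_expand => evuv; exists u, v.
Qed.

End ActionTransfer.

Lemma regular_padded_langL (A : finType) (L : seq A -> Prop) rel :
  regular (padded_lang (@padL A) L rel) <->
  regular (padR_lang (fun u v => [/\ L (rev u), L (rev v) & rel (rev u) (rev v)])).
Proof.
split=> /regular_rev; apply: eq_regular => w; rewrite padded_langL ?revK //.
Qed.

Lemma regular_padded_diag (A : finType) (L : seq A -> Prop) (rel : seq A -> seq A -> Prop) :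
  (forall u, rel u u) -> regular (padded_lang (@padR A) L rel) -> regular L.
Proof.
move=> rel_refl /(regular_preim (fun a => (Some a, Some a))); apply: eq_regular => u.
rewrite -padR_diag padded_langR padR_langE; split=> [[] | Lu] //; exact: And3 Lu Lu (rel_refl u).
Qed.

Lemma expand_rev (A B : finType) (E : A -> seq B) u :
  expand (fun a => rev (E a)) u = rev (expand E (rev u)).
Proof.
elim: u => [|a u IHu] //=.
by rewrite rev_cons -cats1 expand_cat rev_cat -IHu /expand /= cats0.
Qed.

Section ChangeOfGenerators.
Variables (M : Type) (mul : M -> M -> M) (one : M).
Hypothesis monoidM : monoid_laws mul one.
Variables (A : finType) (f : A -> M) (R : seq (seq A * seq A)).
Hypothesis presM : presents mul one f R.
Hypothesis homR : forall p, p \in R -> size p.1 = size p.2.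
Variables (A' : finType) (f' : A' -> M) (L' : seq A' -> Prop).
Hypothesis genA' : generates mul one f'.
Variables (C : finType) (g : C -> M).
Hypothesis genC : generates mul one g.

Local Notation ev h := (eval_word mul one h).
Local Notation mlen := (mlen presM).

Definition short_expansion (a : A') : seq C :=
  proj1_sig (constructive_indefinite_description _ (word_of_mlen monoidM presM homR genC (f' a))).

Lemma short_expansionP a :
  ev g (short_expansion a) = f' a /\ size (short_expansion a) = mlen (f' a).
Proof. by rewrite /short_expansion; case: constructive_indefinite_description. Qed.

Lemma eval_short_expansion u : ev g (expand short_expansion u) = ev f' u.
Proof.
elim: u => [|a u IHu] //=.
by rewrite eval_word_cat // IHu (proj1 (short_expansionP a)).
Qed.

Lemma size_short_expansion u : size (expand short_expansion u) = mlen (ev f' u).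
Proof.
elim: u => [|a u IHu] /=; first by rewrite mlen1.
by rewrite size_cat IHu (proj2 (short_expansionP a)) mlenM.
Qed.

Definition expanded_lang : seq C -> Prop := image_lang short_expansion L'.

Lemma expanded_lang_onto : (forall m, exists w, L' w /\ ev f' w = m) ->
  forall m, exists x, expanded_lang x /\ ev g x = m.
Proof.
move=> ontoL' m; have [w [L'w <-]] := ontoL' m.
by exists (expand short_expansion w); split; [exists w | rewrite eval_short_expansion].
Qed.

Lemma expanded_lang_rev x :
  expanded_lang (rev x) <-> image_lang (fun b => rev (short_expansion b)) (fun u => L' (rev u)) x.
Proof.
split=> [[u L'u ex] | [u L'u ->]].
  by exists (rev u); rewrite ?revK // expand_rev revK -ex revK.
by exists (rev u); rewrite // expand_rev revK.
Qed.

Section Transfer.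
Variables (act : M -> M -> M)
  (rel : forall X : Type, (X -> M) -> option X -> seq X -> seq X -> Prop).
Hypothesis actM : is_action mul act.
Hypothesis relE : forall (X : Type) (h : X -> M) a u v,
  rel h a u v <-> act (ev h (letter_word a)) (ev h u) = ev h v.
Hypothesis mlen_act : forall m z, mlen (act m z) = mlen z + mlen m.
Hypothesis ontoL' : forall m, exists w, L' w /\ ev f' w = m.

Lemma regular_padR_transfer :
  (forall a, regular (padded_lang (@padR A') L' (rel f' a))) ->
  forall a, regular (padded_lang (@padR C) expanded_lang (rel g a)).
Proof.
move=> regL' a.
have regA b : regular (padR_lang (act_rel L' (ev f') act (ev f' (letter_word b)))).
  apply: eq_regular (regL' b) => w; rewrite padded_langR.
  by apply: eq_padR_lang => u v; split=> -[Lu Lv /relE]; split.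
have regG b : regular (padR_lang (act_rel L' (ev f') act (f' b))).
  by rewrite -(eval_word1 monoidM f'); exact: regA (Some b).
have := regular_image_act_rel ontoL' actM genA' (regA None) regG eval_short_expansion
  size_short_expansion mlen_act (ev g (letter_word a)).
apply: eq_regular => w; rewrite padded_langR.
by apply: eq_padR_lang => x y; split=> -[Kx Ky /relE]; split.
Qed.


Lemma regular_padL_transfer :
  (forall a, regular (padded_lang (@padL A') L' (rel f' a))) ->
  forall a, regular (padded_lang (@padL C) expanded_lang (rel g a)).
Proof.
move=> regL' a.
pose L'r u := L' (rev u); pose evr u := ev f' (rev u).
have regA b : regular (padR_lang (act_rel L'r evr act (ev f' (letter_word b)))).
  apply: eq_regular (proj1 (regular_padded_langL _ _) (regL' b)).
  by apply: eq_padR_lang => u v; split=> -[Lu Lv /relE]; split.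
have regG b : regular (padR_lang (act_rel L'r evr act (f' b))).
  by rewrite -(eval_word1 monoidM f'); exact: regA (Some b).
have ontoR m : exists t, L'r t /\ evr t = m.
  by have [t [L't <-]] := ontoL' m; exists (rev t); rewrite /L'r /evr revK.
have evE u : ev g (rev (expand (fun b => rev (short_expansion b)) u)) = evr u.
  by rewrite expand_rev revK eval_short_expansion.
have sizeE u : size (expand (fun b => rev (short_expansion b)) u) = mlen (evr u).
  by rewrite expand_rev size_rev size_short_expansion.
have := regular_image_act_rel (evC := fun x => ev g (rev x)) ontoR actM genA' (regA None) regG
  evE sizeE mlen_act (ev g (letter_word a)).
move=> regK; apply/regular_padded_langL; apply: eq_regular regK => w.
apply: eq_padR_lang => x y.
by split=> -[/expanded_lang_rev Kx /expanded_lang_rev Ky /relE]; split.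
Qed.

End Transfer.

Lemma is_action_right : is_action mul (fun m z => mul z m).
Proof. by case: monoidM => mulA _ _; left. Qed.

Lemma is_action_left : is_action mul mul.
Proof. by case: monoidM => mulA _ _; right=> x y z; rewrite mulA. Qed.

Lemma mlen_act_right m z : mlen (mul z m) = mlen z + mlen m.
Proof. exact: mlenM. Qed.

Lemma mlen_act_left m z : mlen (mul m z) = mlen z + mlen m.
Proof. by rewrite (mlenM monoidM presM homR) addnC. Qed.

Lemma regular_expanded_lang : (forall m, exists w, L' w /\ ev f' w = m) ->
  (forall a, regular (padded_lang (@padR A') L' (right_rel mul one f' a))) ->
  regular_onto mul one g expanded_lang.
Proof.
move=> ontoL' regL'; split; last exact: expanded_lang_onto.
have := regular_padR_transfer is_action_right (right_relE monoidM) mlen_act_right ontoL' regL'.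
by move/(_ None)/regular_padded_diag; apply=> u; rewrite /right_rel cats0.
Qed.

Lemma expanded_automatic :
  automatic_structure mul one f' L' -> automatic_structure mul one g expanded_lang.
Proof.
move=> [[_ ontoL'] regL']; split; first exact: regular_expanded_lang.
exact: regular_padR_transfer is_action_right (right_relE monoidM) mlen_act_right ontoL' regL'.
Qed.

Lemma expanded_biautomatic :
  biautomatic_structure mul one f' L' -> biautomatic_structure mul one g expanded_lang.
Proof.
move=> [[_ ontoL'] regL']; split.
  by apply: regular_expanded_lang => // b; case: (regL' b).
move=> a; split;
  [ apply: regular_padR_transfer is_action_right (right_relE monoidM) mlen_act_right ontoL' _ a
  | apply: regular_padR_transfer is_action_left (left_relE monoidM) mlen_act_left ontoL' _ a
  | apply: regular_padL_transfer is_action_right (right_relE monoidM) mlen_act_right ontoL' _ a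
  | apply: regular_padL_transfer is_action_left (left_relE monoidM) mlen_act_left ontoL' _ a ].
all: by move=> b; case: (regL' b).
Qed.

End ChangeOfGenerators.

Unset Implicit Arguments.

Theorem proposition2p4 (M : Type) (mul : M -> M -> M) (one : M) :
  monoid_laws mul one ->
  homogeneous mul one ->
  (automatic mul one ->
     forall (C : finType) (g : C -> M), generates mul one g ->
       exists K : seq C -> Prop, automatic_structure mul one g K) /\
  (biautomatic mul one ->
     forall (C : finType) (g : C -> M), generates mul one g ->
       exists K : seq C -> Prop, biautomatic_structure mul one g K).
Proof.
move=> monoidM [A [f [R [presM homR]]]].
split=> [[A' [f' [L' [genA' autL']]]] | [A' [f' [L' [genA' autL']]]]] C g genC.
- exists (expanded_lang monoidM presM homR f' L' genC).
  exact: expanded_automatic.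
- exists (expanded_lang monoidM presM homR f' L' genC).
  exact: expanded_biautomatic.
Qed.
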